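(* Let $n\ge 2$ and $1\le m\le n-1$ be integers, and let $\alpha=(\alpha_0,\dots,\alpha_m)$ and $\beta=(\beta_0,\dots,\beta_m)$ be sequences of complex numbers. Let $A = T^{(\alpha,m)} - H^{(\alpha,m)}$ and $B = T^{(\beta,m)} - H^{(\beta,m)}$, where $T^{(\xi,m)}$ and $H^{(\xi,m)}$ are the $n\times n$ matrices defined in the context. Assume that $B$ is invertible. Set $h = \frac{1}{n+1/2}$ and, for $j=1,\dots,n$, $$\lambda_j = \frac{\alpha_0 + 2\sum_{l=1}^{m}\alpha_l\cos(l j\pi h)}{\beta_0 + 2\sum_{l=1}^{m}\beta_l\cos(l j\pi h)},\qquad \boldsymbol{x}_j=(x_{j,1},\dots,x_{j,n})^T,\quad x_{j,k} = C\sin\!\big(j\pi(k-1/2)h\big),\ k=1,\dots,n,$$ where $C\neq 0$ is a constant. Then for every $j=1,\dots,n$, $(\lambda_j,\boldsymbol{x}_j)$ is an eigenpair of the generalised matrix eigenvalue problem $A\boldsymbol{x}=\lambda B\boldsymbol{x}$, i.e. $A\boldsymbol{x}_j=\lambda_j B\boldsymbol{x}_j$.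
   Context: For a sequence $\xi=(\xi_0,\xi_1,\dots,\xi_m)$ of complex numbers and $m\le n-1$, $T^{(\xi,m)}\in\mathbb{C}^{n\times n}$ is the symmetric banded Toeplitz matrix with entries $T^{(\xi,m)}_{j,j+k}=\xi_{|k|}$ if $|k|\le m$ (for all $j$ and integers $k$ with $1\le j, j+k\le n$) and all other entries $0$. $H^{(\xi,m)}\in\mathbb{C}^{n\times n}$ is the Hankel-type matrix with entries: $H^{(\xi,m)}_{j,k}=\xi_{j+k-1}$ for $j=1,\dots,m$ and $k=1,\dots,m-j+1$ (upper-left corner); $H^{(\xi,m)}_{n-j+1,\,n-k+1}=\xi_{j+k}$ for $j=1,\dots,m-1$ and $k=1,\dots,m-j$ (lower-right corner; this part is empty when $m=1$); and all other entries $0$. For example, for $m=2$ the matrix $A=T^{(\alpha,2)}-H^{(\alpha,2)}$ has first row $(\alpha_0-\alpha_1,\ \alpha_1-\alpha_2,\ \alpha_2,0,\dots)$, second row $(\alpha_1-\alpha_2,\ \alpha_0,\ \alpha_1,\ \alpha_2,0,\dots)$, and last diagonal entry $\alpha_0-\alpha_2$, with all other entries as in $T^{(\alpha,2)}$. *)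

From HB Require Import structures.
From mathcomp Require Import all_boot all_algebra.
From mathcomp Require Import reals trigo.
From mathcomp Require Export complex.
Set Implicit Arguments. Unset Strict Implicit. Unset Printing Implicit Defensive.
Import GRing.Theory Num.Theory.
Local Open Scope ring_scope.

(* Sequences xi = (xi_0,...,xi_m) are given as functions nat -> C; only the
   values xi_0..xi_m are ever used below. Matrices are indexed by 'I_n
   (0-based); r := i.+1, c := j.+1 are the paper's 1-based indices. *)

Definition toepT (C : pzRingType) (n m : nat) (xi : nat -> C) : 'M[C]_n :=
  \matrix_(i < n, j < n)
    let d := if (i <= j)%N then (j - i)%N else (i - j)%N in
    if (d <= m)%N then xi d else 0.

(* Hankel-type matrix H^(xi,m):
   H_{r,c} = xi_{r+c-1} for 1<=r<=m, 1<=c<=m-r+1 (upper-left corner);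
   H_{n-a+1, n-b+1} = xi_{a+b} for 1<=a<=m-1, 1<=b<=m-a (lower-right corner);
   0 otherwise. (The two corners are disjoint.) *)
Definition hankH (C : pzRingType) (n m : nat) (xi : nat -> C) : 'M[C]_n :=
  \matrix_(i < n, j < n)
    let r := i.+1 in let c := j.+1 in
    let a := (n - r + 1)%N in let b := (n - c + 1)%N in
    if [&& (1 <= r <= m)%N & (1 <= c <= m - r + 1)%N] then xi (r + c - 1)%N
    else if [&& (1 <= a <= m - 1)%N & (1 <= b <= m - a)%N] then xi (a + b)%N
    else 0.

Definition symb (R : realType) (m : nat) (xi : nat -> R[i]) (theta : R) : R[i] :=
  xi 0%N + 2%:R * \sum_(1 <= l < m.+1) xi l * ((cos (l%:R * theta))%:C)%C.

From HB Require Import structures.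
From mathcomp Require Import all_boot all_algebra.
From mathcomp Require Import reals trigo complex.
From mathcomp Require Import zify ring lra.
Import GRing.Theory Num.Theory.
Local Open Scope ring_scope.

(* Extend the candidate eigenvector to all of Z by f(t) = sin((t + 1/2) theta),
   theta = j pi h, so that (2n + 1) theta is a multiple of 2 pi.  Then f is odd
   about -1/2 and about n (in particular f(n) = 0).  In row i, the Toeplitz part
   sees f(i + l) and f(i - l) only when these indices lie in [0, n); the two
   Hankel corners contribute exactly the missing ones, reflected back into
   [0, n) with a sign that the oddness of f cancels.  Hence
   ((T - H) f)_i = xi_0 f(i) + sum_l xi_l (f(i + l) + f(i - l)) = symb(theta) f(i),
   by sin(x + y) + sin(x - y) = 2 cos y sin x.  So A and B act on x as the scalars
   symb alpha and symb beta, and when symb beta = 0 the invertibility of B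
   forces x = 0. *)

Lemma sum_nat_delta (V : nmodType) (a b c : nat) (P : bool) (F : nat -> V) :
  \sum_(a <= l < b) F l *+ (P && (l == c)) = F c *+ (P && (a <= c < b)%N).
Proof.
case: P => /=; last by rewrite big1.
have [c_in | c_out] := boolP (a <= c < b)%N.
  rewrite (bigD1_seq c) ?mem_index_iota ?iota_uniq //= eqxx big1 ?addr0 //.
  by move=> l lc; rewrite (negbTE lc).
rewrite big1_seq // => l; rewrite mem_index_iota => l_in.
by case: eqP l_in => // ->; rewrite (negbTE c_out).
Qed.

Lemma sum_ord_delta_int (V : nmodType) (n : nat) (c : int) (f : int -> V) :
  \sum_(k < n) f k *+ (k == c :> int) = f c *+ ((0 <= c) && (c < n%:Z)).
Proof.
case: c => [c | c] /=; last by rewrite big1.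
rewrite ltz_nat -(big_mkord xpredT (fun k => f k *+ (true && (k == c)))).
by rewrite sum_nat_delta.
Qed.

Lemma toepT_entry (C : pzRingType) (n m : nat) (xi : nat -> C) (i k : 'I_n) :
  toepT n m xi i k = xi 0%N *+ (k == i :> int) +
    \sum_(1 <= l < m.+1) (xi l *+ (k%:Z == i%:Z + l%:Z) + xi l *+ (k%:Z == i%:Z - l%:Z)).
Proof.
have up l : (k%:Z == i%:Z + l%:Z) = (i <= k)%N && (l == k - i)%N by apply/idP/idP; lia.
have down l : (k%:Z == i%:Z - l%:Z) = (k <= i)%N && (l == i - k)%N by apply/idP/idP; lia.
under eq_bigr do rewrite up down.
rewrite mxE big_split !sum_nat_delta /= ltnS.
case: (ltngtP i k) => [ik | ki | /val_inj ->]; last by rewrite eqxx subnn /= !addr0.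
- rewrite eqz_nat gtn_eqF // !subn_gt0 ik /= mulr0n addr0 add0r.
  by case: ifP; rewrite ?mulr1n.
- rewrite eqz_nat ltn_eqF // !subn_gt0 ki ltnS /= mulr0n !add0r.
  by case: ifP; rewrite ?mulr1n.
Qed.

Lemma hankH_entry (C : pzRingType) (n m : nat) (xi : nat -> C) (i k : 'I_n) :
  (m <= n - 1)%N ->
  hankH n m xi i k = \sum_(1 <= l < m.+1)
    (xi l *+ (k%:Z == l%:Z - 1 - i%:Z) + xi l *+ (k%:Z == (n.*2)%:Z - i%:Z - l%:Z)).
Proof.
move=> le_m_n; have lt_i := ltn_ord i; have lt_k := ltn_ord k.
have upper_left l : (k%:Z == l%:Z - 1 - i%:Z) = true && (l == i + k + 1)%N.
  by apply/idP/idP; lia.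
have lower_right l : (k%:Z == (n.*2)%:Z - i%:Z - l%:Z) =
    (i + k <= n.*2)%N && (l == n.*2 - (i + k))%N.
  by apply/idP/idP; lia.
under eq_bigr do rewrite upper_left lower_right.
rewrite mxE big_split !sum_nat_delta !mulrb /=.
(* The two corners are disjoint because m < n. *)
by repeat (case: ifP => ?); rewrite ?addr0 ?add0r //; try congr (xi _); lia.
Qed.

Lemma sum_ord_delta_mul (C : pzRingType) (n : nat) (y : C) (c : int) (f : int -> C) :
  \sum_(k < n) y *+ (k == c :> int) * f k = y * f c *+ ((0 <= c) && (c < n%:Z)).
Proof.
under eq_bigr do rewrite mulrnAl -mulrnAr.
by rewrite -mulr_sumr sum_ord_delta_int mulrnAr.
Qed.

Section ToeplitzMinusHankel.
Variables (C : pzRingType) (n m : nat) (xi : nat -> C) (f : int -> C).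

Lemma toepT_mul_col (i : 'I_n) :
  (toepT n m xi *m \col_(k < n) f k) i 0 = xi 0%N * f i +
    \sum_(1 <= l < m.+1)
      xi l * (f (i%:Z + l%:Z) *+ (i + l < n)%N + f (i%:Z - l%:Z) *+ (l <= i)%N).
Proof.
rewrite mxE; under eq_bigr do rewrite toepT_entry mxE mulrDl mulr_suml.
rewrite big_split sum_ord_delta_mul exchange_big /=.
rewrite ltz_nat ltn_ord mulr1n; congr (_ + _); apply: eq_bigr => l _.
under eq_bigr do rewrite mulrDl.
rewrite big_split /= !sum_ord_delta_mul -!mulrnAr -mulrDr.
have lt_i := ltn_ord i.
by congr (_ * (_ *+ nat_of_bool _ + _ *+ nat_of_bool _)); apply/idP/idP; lia.
Qed.

Lemma hankH_mul_col (i : 'I_n) : (m <= n - 1)%N ->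
  (hankH n m xi *m \col_(k < n) f k) i 0 = \sum_(1 <= l < m.+1)
    xi l * (f (l%:Z - 1 - i%:Z) *+ (i < l)%N
            + f ((n.*2)%:Z - i%:Z - l%:Z) *+ (n < i + l)%N).
Proof.
move=> le_m_n; rewrite mxE; under eq_bigr do rewrite hankH_entry // mxE mulr_suml.
rewrite exchange_big /=; apply: eq_big_nat => l /andP [_ le_l_m].
under eq_bigr do rewrite mulrDl.
rewrite big_split /= !sum_ord_delta_mul -!mulrnAr -mulrDr.
have lt_i := ltn_ord i.
by congr (_ * (_ *+ nat_of_bool _ + _ *+ nat_of_bool _)); apply/idP/idP; lia.
Qed.

Hypothesis le_m_n : (m <= n - 1)%N.
Hypothesis f_reflect_low : forall t, f (-1 - t) = - f t.
Hypothesis f_reflect_high : forall t, f ((n.*2)%:Z - t) = - f t.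
Hypothesis f_at_n : f n = 0. (* not implied by [f_reflect_high] in characteristic 2 *)

Lemma toepT_sub_hankH_mul_col (i : 'I_n) :
  ((toepT n m xi - hankH n m xi) *m \col_(k < n) f k) i 0 =
    xi 0%N * f i + \sum_(1 <= l < m.+1) xi l * (f (i%:Z + l%:Z) + f (i%:Z - l%:Z)).
Proof.
rewrite mulmxBl mxE [X in _ + X = _]mxE toepT_mul_col hankH_mul_col //.
rewrite -addrA -sumrB; congr (_ + _).
apply: eq_bigr => l _; rewrite -mulrBr; congr (_ * _).
have -> : l%:Z - 1 - i%:Z = -1 - (i%:Z - l%:Z) by ring.
have -> : (n.*2)%:Z - i%:Z - l%:Z = (n.*2)%:Z - (i%:Z + l%:Z) by ring.
rewrite f_reflect_low f_reflect_high !mulNrn opprD !opprK.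
case: (leqP l i) => _; case: (ltngtP (i + l) n) => [_ | _ | sum_n];
  rewrite ?mulr1n ?mulr0n ?addr0 ?add0r ?(addrC (f (i%:Z - l%:Z))) //.
all: by rewrite -PoszD sum_n f_at_n add0r.
Qed.

Variable c : nat -> C.
Hypothesis f_three_term : forall (t : int) (l : nat), f (t + l%:Z) + f (t - l%:Z) = c l * f t.

Lemma toepT_sub_hankH_eigen :
  (toepT n m xi - hankH n m xi) *m \col_(k < n) f k =
    (xi 0%N + \sum_(1 <= l < m.+1) xi l * c l) *: \col_(k < n) f k.
Proof.
apply/matrixP => i j; rewrite (ord1 j) toepT_sub_hankH_mul_col !mxE mulrDl mulr_suml.
by congr (_ + _); apply: eq_bigr => l _; rewrite f_three_term mulrA.
Qed.
End ToeplitzMinusHankel.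

Lemma mulmx_eigen_ratio (F : fieldType) (n : nat) (A B : 'M[F]_n) (x : 'cV[F]_n)
    (a b : F) :
  B \in unitmx -> A *m x = a *: x -> B *m x = b *: x -> A *m x = (a / b) *: (B *m x).
Proof.
move=> B_unit Ax Bx; have [b0 | nz_b] := eqVneq b 0; last by rewrite Bx scalerA divfK.
have -> : x = 0 by rewrite -(mulKmx B_unit x) Bx b0 scale0r mulmx0.
by rewrite !mulmx0 scaler0.
Qed.

Section MidpointSine.
Context {R : realType}.

Definition midpoint_sin (theta : R) (t : int) : R := sin ((t%:~R + 2^-1) * theta).

Lemma midpoint_sin_reflect_low theta t :
  midpoint_sin theta (-1 - t) = - midpoint_sin theta t.
Proof. by rewrite /midpoint_sin -sinN intrB rmorphN1; congr sin; field. Qed.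

Lemma midpoint_sin_three_term theta t (l : nat) :
  midpoint_sin theta (t + l%:Z) + midpoint_sin theta (t - l%:Z) =
    2 * cos (l%:R * theta) * midpoint_sin theta t.
Proof.
rewrite /midpoint_sin intrD intrB.
have -> : (t%:~R + l%:R + 2^-1) * theta = (t%:~R + 2^-1) * theta + l%:R * theta by ring.
have -> : (t%:~R - l%:R + 2^-1) * theta = (t%:~R + 2^-1) * theta - l%:R * theta by ring.
by rewrite sinD sinB; ring.
Qed.

Context {n j : nat} {theta : R}.
Hypothesis period : (n.*2.+1)%:R * theta = pi *+ 2 *+ j.

Lemma midpoint_sin_reflect_high t :
  midpoint_sin theta ((n.*2)%:Z - t) = - midpoint_sin theta t.
Proof.
rewrite /midpoint_sin -sinN intrB.
have -> : ((n.*2)%:~R - t%:~R + 2^-1) * theta = - ((t%:~R + 2^-1) * theta) + pi *+ 2 *+ j.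
  by rewrite -period -natr1 /=; field.
by rewrite periodicn //; exact: sinD2pi.
Qed.

Lemma midpoint_sin_at_n : midpoint_sin theta n = 0.
Proof.
have := midpoint_sin_reflect_high n.
by rewrite (_ : (n.*2)%:Z - n%:Z = n%:Z); [lra | lia].
Qed.
End MidpointSine.

Lemma toepT_sub_hankH_midpoint_sin {R : realType} {n m j : nat} {theta : R}
    (xi : nat -> R[i]) :
  (m <= n - 1)%N -> (n.*2.+1)%:R * theta = pi *+ 2 *+ j ->
  (toepT n m xi - hankH n m xi) *m \col_(k < n) ((midpoint_sin theta k)%:C)%C =
    symb m xi theta *: \col_(k < n) ((midpoint_sin theta k)%:C)%C.
Proof.
move=> le_m_n period.
have -> : symb m xi theta =
    xi 0%N + \sum_(1 <= l < m.+1) xi l * ((2 * cos (l%:R * theta))%:C)%C.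
  rewrite /symb mulr_sumr; congr (_ + _); apply: eq_bigr => l _.
  by rewrite rmorphM rmorph_nat mulrCA.
apply: (@toepT_sub_hankH_eigen _ n m xi (fun t => ((midpoint_sin theta t)%:C)%C))
  => // [t | t | | t l].
- by rewrite midpoint_sin_reflect_low rmorphN.
- by rewrite (midpoint_sin_reflect_high period) rmorphN.
- by rewrite (midpoint_sin_at_n period).
- by rewrite -rmorphD -rmorphM midpoint_sin_three_term.
Qed.

Theorem mainTheorem1 (R : realType) (n m : nat) (alpha beta : nat -> R[i]) (C : R[i]) :
  (2 <= n)%N -> (1 <= m)%N -> (m <= n - 1)%N ->
  (toepT n m beta - hankH n m beta) \in unitmx ->
  C != 0 ->
  let A := toepT n m alpha - hankH n m alpha in
  let B := toepT n m beta - hankH n m beta in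
  let h : R := 1 / (n%:R + 1 / 2%:R) in
  forall j : nat, (1 <= j <= n)%N ->
    let lambda := symb m alpha (j%:R * pi * h) / symb m beta (j%:R * pi * h) in
    let x : 'cV[R[i]]_n :=
      \col_(k < n) (C * ((sin (j%:R * pi * (k.+1%:R - 1 / 2%:R) * h))%:C)%C) in
    A *m x = lambda *: (B *m x).
Proof.
move=> _ _ le_m_n B_unit _ A B h j _ lambda x.
set theta := j%:R * pi * h.
have n_ge0 : 0 <= n%:R :> R := ler0n R n.
have period : (n.*2.+1)%:R * theta = pi *+ 2 *+ j.
  by rewrite /theta /h -natr1 -muln2 natrM -mulrnA -[pi *+ _]mulr_natr natrM; field; lra.
set v := \col_(k < n) ((midpoint_sin theta k)%:C)%C.
have x_v : x = C *: v.
  apply/matrixP => k o; rewrite !mxE /midpoint_sin /theta /=.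
  by congr (_ * (sin _)%:C)%C; rewrite -natr1; field; lra.
have eigen xi : (toepT n m xi - hankH n m xi) *m x = symb m xi theta *: x.
  by rewrite x_v -scalemxAr (toepT_sub_hankH_midpoint_sin xi le_m_n period) !scalerA mulrC.
rewrite /A /B /lambda -/theta.
exact: mulmx_eigen_ratio.
Qed.
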